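(* Let $S_2$ be the two-dimensional Lie triple system with basis $e,f$ and products $[e,f,e]=2e$, $[e,f,f]=-2f$ (over a field of characteristic $0$). Then in $U(S_2)$, for every $n\ge1$, $$e^nf-fe^n=n(n-1)\,e^{n-1},$$ where $e^n=e(e(\cdots(ee)\cdots))$ ($n$ factors) and $e^0=1$.
   Context: A Lie triple system (L.t.s.) is a vector space $V$ with trilinear product $[\cdot,\cdot,\cdot]$ satisfying $[a,a,b]=0$, $[a,b,c]+[b,c,a]+[c,a,b]=0$, $[x,y,[a,b,c]]=[[x,y,a],b,c]+[a,[x,y,b],c]+[a,b,[x,y,c]]$ (so the products of $S_2$ determine the rest by these identities). The universal enveloping algebra $U(V)$ (in the sense of Pérez-Izquierdo, $V$ viewed as a Bol algebra with zero binary bracket) is a unital non-associative bialgebra generated as a unital algebra by $V\subseteq U(V)$ ($V$ = primitive elements), satisfying $\sum a_{(1)}(y(a_{(2)}z))=\sum (a_{(1)}(ya_{(2)}))z$; in particular, for $a,b,c\in V$, $ab=ba$, $a(bc)-b(ac)=[a,b,c]$, and for $a,b\in V$ the map $x\mapsto a(bx)-b(ax)$ is a derivation of $U(V)$. *)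

From HB Require Import structures.
From mathcomp Require Import all_boot all_order all_algebra.
Set Implicit Arguments. Unset Strict Implicit. Unset Printing Implicit Defensive.
Import GRing.Theory.
Local Open Scope ring_scope.

(* is the unique eone determined (via [a,a,b]=0, hence antisymmetry in the  *)
(* first two slots) by [e,f,e] = 2e, [e,f,f] = -2f:                        *)
(*   [x,y,z] = (x1 y2 - x2 y1) * (2 z1 e - 2 z2 f).                         *)
Section S2.
Variable K : fieldType.

Definition S2e : 'rV[K]_2 := \row_(j < 2) (if j == 0 then 1 else 0).
Definition S2f : 'rV[K]_2 := \row_(j < 2) (if j == 0 then 0 else 1).

Definition S2trip (x y z : 'rV[K]_2) : 'rV[K]_2 :=
  (x 0 0 * y 0 1 - x 0 1 * y 0 0) *: ((2 * z 0 0) *: S2e - (2 * z 0 1) *: S2f).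
End S2.

(* A unital non-associative K-algebra A (bilinear product emul, unit eone)   *)
(* together with a linear embedding eiota : V -> A of a Lie triple system   *)
(* (V, trip), satisfying the properties of the universal enveloping        *)
(* algebra U(V) (Perez-Izquierdo, V a Bol algebra with zero binary         *)
(* bracket) that are recorded in the paper:                                *)
(*  - eiota(V) consists of primitive elements, and the defining identity    *)
(*    sum a_(1)(y(a_(2)z)) = sum (a_(1)(y a_(2)))z for primitive a, i.e.   *)
(*    a(yz) + y(az) = (ay)z + (ya)z;                                       *)
Record LTSEnvelope (K : fieldType) (V : lmodType K)
    (trip : V -> V -> V -> V) (A : lmodType K) := {
  emul : A -> A -> A;
  eone : A;
  eiota : V -> A;
  mul_linl : forall (c : K) (x y z : A), emul (c *: x + y) z = c *: emul x z + emul y z;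
  mul_linr : forall (c : K) (x y z : A), emul z (c *: x + y) = c *: emul z x + emul z y;
  mul1x : forall x : A, emul eone x = x;
  mulx1 : forall x : A, emul x eone = x;
  iota_lin : forall (c : K) (u v : V), eiota (c *: u + v) = c *: eiota u + eiota v;
  iota_inj : injective eiota;
  prim_id : forall (a : V) (y z : A),
    emul (eiota a) (emul y z) + emul y (emul (eiota a) z)
    = emul (emul (eiota a) y) z + emul (emul y (eiota a)) z;
  iota_comm : forall a b : V, emul (eiota a) (eiota b) = emul (eiota b) (eiota a);
  iota_trip : forall a b c : V,
    emul (eiota a) (emul (eiota b) (eiota c)) - emul (eiota b) (emul (eiota a) (eiota c))
    = eiota (trip a b c);
  deriv_ab : forall (a b : V) (x y : A),
    let D := fun w => emul (eiota a) (emul (eiota b) w) - emul (eiota b) (emul (eiota a) w) in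
    D (emul x y) = emul (D x) y + emul x (D y)
}.

Definition npow (K : fieldType) (V : lmodType K) (trip : V -> V -> V -> V)
  (A : lmodType K) (U : LTSEnvelope trip A) (x : A) (n : nat) : A :=
  iter n (fun w => emul U x w) (eone U).

From mathcomp Require Import all_boot all_order all_algebra.
Local Open Scope ring_scope.
Import GRing.Theory.

(* For a primitive element a, the defining identity with y = a^k shows that
   left multiplication by a^k is the k-th iterate of left multiplication by a
   (after cancelling a factor 2).  The inner derivation D = D(a,b) satisfies
   D(a) = [a,b,a] = c a, hence D(a^k) = k c a^k, i.e. b a^(k+1) = a (b a^k) - k c a^k.
   Inducting on k, the commutator a^(k+1) b - b a^(k+1) gains k c a^k at each
   step, which sums to C(k+1,2) c a^k; for S_2 one has c = 2. *)

Section Envelope.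
Variables (K : fieldType) (V : lmodType K) (trip : V -> V -> V -> V).
Variables (A : lmodType K) (U : LTSEnvelope trip A).
Local Notation m := (emul U).
Local Notation i := (eiota U).

Lemma emul0l z : m 0 z = 0.
Proof.
have := mul_linl U 1 0 0 z; rewrite !scale1r addr0 => h.
by apply: (addrI (m 0 z)); rewrite addr0 -h.
Qed.

Lemma emul0r z : m z 0 = 0.
Proof.
have := mul_linr U 1 0 0 z; rewrite !scale1r addr0 => h.
by apply: (addrI (m z 0)); rewrite addr0 -h.
Qed.

Lemma emulDr x y z : m z (x + y) = m z x + m z y.
Proof. by have := mul_linr U 1 x y z; rewrite !scale1r. Qed.

Lemma emulZl c x z : m (c *: x) z = c *: m x z.
Proof. by have := mul_linl U c x 0 z; rewrite !addr0 emul0l addr0. Qed.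

Lemma emulZr c x z : m z (c *: x) = c *: m z x.
Proof. by have := mul_linr U c x 0 z; rewrite !addr0 emul0r addr0. Qed.

Lemma emulBr x y z : m z (x - y) = m z x - m z y.
Proof. by rewrite emulDr -scaleN1r emulZr scaleN1r. Qed.

Lemma eiotaZ c u : i (c *: u) = c *: i u.
Proof.
have i0 : i 0 = 0.
  have := iota_lin U 1 0 0; rewrite !scale1r addr0 => h.
  by apply: (addrI (i 0)); rewrite addr0 -h.
by have := iota_lin U c u 0; rewrite !addr0 i0 addr0.
Qed.

Lemma npowS x n : npow U x n.+1 = m x (npow U x n).
Proof. by []. Qed.

Lemma emul_npowl (two_neq0 : (2%:R : K) != 0) a n x :
  m (npow U (i a) n) x = iter n (m (i a)) x.
Proof.
have cancel2 (y z : A) : y + y = z + z -> y = z.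
  move=> yz; rewrite -(scalerK two_neq0 y) -(scalerK two_neq0 z).
  by rewrite !scaler_nat !mulr2n yz.
elim: n x => [|n IHn] x; first exact: mul1x.
have npow_mula : m (npow U (i a) n) (i a) = npow U (i a) n.+1.
  by rewrite IHn -[X in iter _ _ X](mulx1 U) -iterSr.
apply: cancel2; rewrite -{1}npow_mula npowS addrC -(prim_id U a).
by rewrite !IHn -iterSr.
Qed.

Definition ider (a b : V) (w : A) : A := m (i a) (m (i b) w) - m (i b) (m (i a) w).

Lemma iderM a b x y : ider a b (m x y) = m (ider a b x) y + m x (ider a b y).
Proof. exact: deriv_ab. Qed.

Lemma ider_npow a b (c : K) n :
  trip a b a = c *: a -> ider a b (npow U (i a) n) = (c *+ n) *: npow U (i a) n.
Proof.
move=> abac; elim: n => [|n IHn].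
  by rewrite /ider /= !mulx1 iota_comm subrr scale0r.
have ider_a : ider a b (i a) = c *: i a by rewrite /ider iota_trip abac eiotaZ.
rewrite npowS iderM ider_a IHn.
by rewrite emulZl emulZr -scalerDl mulrSr addrC.
Qed.

Lemma emul_iota_npowS a b (c : K) n :
  trip a b a = c *: a ->
  m (i b) (npow U (i a) n.+1)
  = m (i a) (m (i b) (npow U (i a) n)) - (c *+ n) *: npow U (i a) n.
Proof. by move=> abac; rewrite -(ider_npow a b c n abac) /ider opprB addrC subrK. Qed.

Theorem commutator_npow (two_neq0 : (2%:R : K) != 0) a b (c : K) n :
  trip a b a = c *: a ->
  m (npow U (i a) n.+1) (i b) - m (i b) (npow U (i a) n.+1)
  = (c *+ 'C(n.+1, 2)) *: npow U (i a) n.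
Proof.
move=> abac; elim: n => [|n IHn].
  by rewrite /= !mulx1 iota_comm subrr scale0r.
have -> : m (npow U (i a) n.+2) (i b) = m (i a) (m (npow U (i a) n.+1) (i b)).
  by rewrite !emul_npowl.
rewrite (emul_iota_npowS a b c n.+1 abac) opprB addrCA -emulBr IHn emulZr.
by rewrite -npowS addrC -scalerDl -mulrnDr [in RHS]binS bin1.
Qed.

End Envelope.

Lemma S2trip_efe (K : fieldType) : S2trip (S2e K) (S2f K) (S2e K) = 2%:R *: S2e K.
Proof.
apply/rowP => j; rewrite /S2trip !mxE !eqxx /=.
by case: (j == 0); rewrite /= !(mul1r, mulr1, mul0r, mulr0, subr0, sub0r).
Qed.

Theorem lemma3p1 (K : fieldType) (charK0 : [pchar K] =i pred0)
  (A : lmodType K) (U : LTSEnvelope (@S2trip K) A) (n : nat) (hn : (1 <= n)%N) :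
  emul U (npow U (eiota U (S2e K)) n) (eiota U (S2f K))
    - emul U (eiota U (S2f K)) (npow U (eiota U (S2e K)) n)
  = (n * (n - 1))%:R *: npow U (eiota U (S2e K)) (n - 1).
Proof.
have two_neq0 : (2%:R : K) != 0 by rewrite (pcharf0P _).1.
case: n hn => [//|n] _.
rewrite (@commutator_npow _ _ _ _ U two_neq0 _ _ _ n (S2trip_efe K)) subn1 /=.
have bin2_ffact : (n.+1 * n = 2 * 'C(n.+1, 2))%N.
  by rewrite [RHS]mulnC (bin_ffact n.+1 2) ffactnS ffactn1.
by rewrite bin2_ffact natrM mulr_natr.
Qed.
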